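(* Let $\mathsf P'\subset\mathbb R^m$ be a $(\mu',\epsilon')$-net, $0<\Gamma_0\le1$, $\delta_0\ge0$, and $\delta=\delta_0\mu'\epsilon'$. If some $m$-simplex $\sigma^m\in\mathrm{Del}_{D_{\epsilon'}}(\mathsf P')$ is not $\delta$-protected, then $\mathsf P'$ contains a forbidden configuration (with parameters $\mu',\epsilon',\delta_0,\Gamma_0$). Likewise, if some $m$-simplex $\sigma^m\in\mathrm{Del}_{D_{\epsilon'}}(\mathsf P')$ is not $\Gamma_0$-good, then $\mathsf P'$ contains a forbidden configuration.
   Context: Let $d(x,X)$ denote Euclidean distance from a point to a set; $B(c,r)$ is the open ball. For a finite $\mathsf P\subset\mathbb R^m$ and $\epsilon>0$, $\mathsf P$ is $\epsilon$-dense if $d(x,\mathsf P\cup\partial\,\mathrm{conv}(\mathsf P))<\epsilon$ for every $x\in\mathrm{conv}(\mathsf P)$; it is $\mu\epsilon$-separated if $\|p-q\|\ge\mu\epsilon$ for all distinct $p,q\in\mathsf P$. For $0<\mu\le1$, $\mathsf P$ is a $(\mu,\epsilon)$-net if it is $\epsilon$-dense and $\mu\epsilon$-separated. $D_\epsilon(\mathsf P)=\{x\in\mathrm{conv}(\mathsf P): d(x,\partial\,\mathrm{conv}(\mathsf P))\ge\epsilon\}$. A simplex is a nonempty finite subset $\sigma\subset\mathbb R^m$ (vertices need not be affinely independent); $\dim\sigma=|\sigma|-1$; faces are nonempty subsets. For $p\in\sigma$, $\sigma_p=\sigma\setminus\{p\}$. $L(\sigma)$ is the largest distance between vertices. Altitude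 $D(p,\sigma)=d(p,\mathrm{aff}(\sigma_p))$. Thickness of a $j$-simplex: $\Upsilon(\sigma)=1$ if $j=0$, else $\min_{p}D(p,\sigma)/(jL(\sigma))$. $\sigma$ is $\Gamma_0$-good if every $j$-face $\sigma^j$ satisfies $\Upsilon(\sigma^j)\ge\Gamma_0^j$; $\Gamma_0$-bad otherwise; a $\Gamma_0$-flake is a $\Gamma_0$-bad simplex whose proper faces are all $\Gamma_0$-good. A circumscribing ball of $\sigma$ is an open ball whose boundary contains all vertices of $\sigma$. A Delaunay ball for finite $\mathsf P$ is an open ball $B(x,r)$ containing no point of $\mathsf P$ such that every open ball centred at $x$ containing no point of $\mathsf P$ is contained in $B(x,r)$. $\sigma\subseteq\mathsf P$ is Delaunay if its vertices lie on $\partial B$ for some Delaunay ball $B$. $\mathrm{Del}_{D_\epsilon}(\mathsf P)$ is the set of Delaunay simplices having a Delaunay ball centred in $D_\epsilon(\mathsf P)$. A Delaunay simplex $\sigma$ is $\delta$-protected if it has a Delaunay ball $B$ with $d(q,\partial B)>\delta$ for all $q\in\mathsf P\setminus\sigma$. Forbidden configuration: given a finite $\mathsf P'\subset\mathbb R^m$ and parameters $\mu',\epsilon'>0$, $0<\Gamma_0\le1$, $\delta_0\ge0$, a $(k+1)$-simplex $\tau\subseteq\mathsf P'$ with $k\le m$ is a forbidden configuration if it is a $\Gamma_0$-flake and there exist $p\in\tau$ and a circumscribing ball $B(C,R)$ of $\tau_p$ with $R<\epsilon'$ and $\big|\,\|p-C\|-R\,\big|\le\delta_0\mu'\epsilon'$;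 it is then said to be certified by $p$ and $B(C,R)$. *)

From Stdlib Require Import Reals List.
From mathcomp Require Import ssreflect ssrbool fintype bigop.
Import ListNotations.
Set Implicit Arguments.
Unset Strict Implicit.

Open Scope R_scope.

Definition pt (m : nat) := 'I_m -> R.

Definition origin {m : nat} : pt m := fun _ => 0.

Definition dist {m : nat} (x y : pt m) : R :=
  sqrt (\big[Rplus/0]_(i < m) ((x i - y i) * (x i - y i))).

Definition ball {m : nat} (c : pt m) (r : R) (y : pt m) : Prop := dist c y < r.

Definition boundary {m : nat} (X : pt m -> Prop) (x : pt m) : Prop :=
  forall r, 0 < r ->
    (exists y, X y /\ dist x y < r) /\ (exists y, ~ X y /\ dist x y < r).

(** Distance from a point to a set, d(x,X) = inf_{y in X} |x-y| (inf of the
    empty set = +oo); we only need comparisons of d(x,X) with a real c, which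
    we write out as what the infimum literally unfolds to. *)
Definition dist_set_lt {m : nat} (x : pt m) (X : pt m -> Prop) (c : R) : Prop :=
  exists y, X y /\ dist x y < c.
Definition dist_set_ge {m : nat} (x : pt m) (X : pt m -> Prop) (c : R) : Prop :=
  forall y, X y -> c <= dist x y.
Definition dist_set_gt {m : nat} (x : pt m) (X : pt m -> Prop) (c : R) : Prop :=
  exists c', c < c' /\ dist_set_ge x X c'.

(** Finite point sets and simplices are represented by duplicate-free lists
    of points. Linear combinations of the points of a list, with the
    coefficient of the k-th point (0-based) given by lam k. *)
Fixpoint lincomb {m : nat} (lam : nat -> R) (S : list (pt m)) : pt m :=
  match S with
  | [] => fun _ => 0
  | p :: S' => fun i => lam 0%nat * p i + lincomb (fun k => lam (Datatypes.S k)) S' i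
  end.

Fixpoint wsum {m : nat} (lam : nat -> R) (S : list (pt m)) : R :=
  match S with
  | [] => 0
  | _ :: S' => lam 0%nat + wsum (fun k => lam (Datatypes.S k)) S'
  end.

Definition in_conv {m : nat} (S : list (pt m)) (x : pt m) : Prop :=
  exists lam : nat -> R,
    (forall k, (k < length S)%nat -> 0 <= lam k) /\
    wsum lam S = 1 /\ x = lincomb lam S.

Definition in_aff {m : nat} (S : list (pt m)) (x : pt m) : Prop :=
  exists lam : nat -> R, wsum lam S = 1 /\ x = lincomb lam S.

Definition eps_dense {m : nat} (P : list (pt m)) (eps : R) : Prop :=
  forall x, in_conv P x ->
    dist_set_lt x (fun y => In y P \/ boundary (in_conv P) y) eps.

Definition separated {m : nat} (P : list (pt m)) (s : R) : Prop :=
  forall p q, In p P -> In q P -> p <> q -> s <= dist p q.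

Definition is_net {m : nat} (P : list (pt m)) (mu eps : R) : Prop :=
  0 < mu <= 1 /\ 0 < eps /\ eps_dense P eps /\ separated P (mu * eps).

Definition in_D {m : nat} (P : list (pt m)) (eps : R) (x : pt m) : Prop :=
  in_conv P x /\ dist_set_ge x (boundary (in_conv P)) eps.

Definition simplex {m : nat} (s : list (pt m)) : Prop := s <> [] /\ NoDup s.

Definition simplex_dim {m : nat} (s : list (pt m)) : nat := (length s - 1)%nat.

Definition face {m : nat} (t s : list (pt m)) : Prop := simplex t /\ incl t s.
Definition proper_face {m : nat} (t s : list (pt m)) : Prop :=
  face t s /\ (length t < length s)%nat.

(** Removing the vertex at position i: sigma_p for p = nth i sigma. *)
Fixpoint rem_at {A : Type} (i : nat) (l : list A) : list A :=
  match l, i with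
  | [], _ => []
  | _ :: l', O => l'
  | x :: l', S i' => x :: rem_at i' l'
  end.

Definition diam {m : nat} (s : list (pt m)) : R :=
  fold_right Rmax 0 (map (fun pq => dist (fst pq) (snd pq)) (list_prod s s)).

Definition altitude_ge {m : nat} (s : list (pt m)) (i : nat) (c : R) : Prop :=
  dist_set_ge (nth i s origin) (in_aff (rem_at i s)) c.

(** Upsilon(sigma) >= c, where Upsilon(sigma) = 1 if j = 0 and otherwise
    min_p D(p,sigma)/(j L(sigma)), j = dim sigma (here j L(sigma) > 0). *)
Definition thickness_ge {m : nat} (s : list (pt m)) (c : R) : Prop :=
  let j := simplex_dim s in
  if Nat.eqb j 0 then c <= 1
  else forall i, (i < length s)%nat ->
         altitude_ge s i (c * (INR j * diam s)).

Definition good {m : nat} (G0 : R) (s : list (pt m)) : Prop :=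
  forall t, face t s -> thickness_ge t (G0 ^ simplex_dim t).

Definition flake {m : nat} (G0 : R) (s : list (pt m)) : Prop :=
  ~ good G0 s /\ forall t, proper_face t s -> good G0 t.

Definition circumscribing {m : nat} (s : list (pt m)) (C : pt m) (R0 : R) : Prop :=
  0 < R0 /\ forall v, In v s -> dist C v = R0.

Definition empty_ball {m : nat} (P : list (pt m)) (x : pt m) (r : R) : Prop :=
  forall p, In p P -> ~ ball x r p.

Definition delaunay_ball {m : nat} (P : list (pt m)) (x : pt m) (r : R) : Prop :=
  0 < r /\ empty_ball P x r /\
  forall r', 0 < r' -> empty_ball P x r' -> forall y, ball x r' y -> ball x r y.

Definition delaunay_with {m : nat} (P : list (pt m)) (s : list (pt m))
    (x : pt m) (r : R) : Prop :=
  delaunay_ball P x r /\ forall v, In v s -> boundary (ball x r) v.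

Definition in_Del_D {m : nat} (P : list (pt m)) (eps : R) (s : list (pt m)) : Prop :=
  simplex s /\ incl s P /\
  exists x r, delaunay_with P s x r /\ in_D P eps x.

Definition protected {m : nat} (P : list (pt m)) (delta : R) (s : list (pt m)) : Prop :=
  exists x r, delaunay_with P s x r /\
    forall q, In q P -> ~ In q s -> dist_set_gt q (boundary (ball x r)) delta.

Definition forbidden {m : nat} (P : list (pt m)) (mu eps G0 d0 : R)
    (t : list (pt m)) : Prop :=
  simplex t /\ incl t P /\
  (exists k : nat, length t = (k + 2)%nat /\ (k <= m)%nat) /\
  flake G0 t /\
  exists i, (i < length t)%nat /\
    exists C R0, circumscribing (rem_at i t) C R0 /\ R0 < eps /\
      Rabs (dist (nth i t origin) C - R0) <= d0 * mu * eps.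

From Stdlib Require Import Rbase Rfunctions R_sqrt List Lra Lia Classical FunctionalExtensionality.
From mathcomp Require Import ssreflect ssrbool eqtype fintype bigop.
From mathcomp Require Import ssralg matrix mxalgebra Rstruct.
Open Scope R_scope.

(* Both cases reduce to one geometric situation.  eps'-density forces every
   such Delaunay ball to have radius r < eps', and the vertices of s lie on
   its sphere.  If s is bad, it has a face that is a flake (descend to a bad
   proper face as long as there is one); every vertex of that flake lies on
   the sphere, so the sphere certifies it.  If s is good but not protected,
   some q in P \ s lies within delta of the sphere; the m + 2 points q :: s
   of R^m are affinely dependent, hence not good (some altitude vanishes),
   so they contain a flake, and that flake must use q since its faces
   inside s are good; q and the sphere certify it. *)

Lemma rsum_ge0 {n} {P : pred 'I_n} {f : 'I_n -> R} :
  (forall i, 0 <= f i) -> 0 <= \big[Rplus/0]_(i < n | P i) f i.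
Proof. by move=> f_ge0; apply: (big_ind (fun x => 0 <= x)) => // *; lra. Qed.

Lemma rsum_eq0 {n} {f : 'I_n -> R} :
  (forall i, 0 <= f i) -> \big[Rplus/0]_(i < n) f i = 0 -> forall i, f i = 0.
Proof.
move=> f_ge0 sum0 i; move: sum0; rewrite (bigD1 i) //=.
set rest := \big[Rplus/0]_(j < n | _) _.
have rest_ge0 : 0 <= rest by exact: rsum_ge0.
by have := f_ge0 i; lra.
Qed.

Lemma cauchy_schwarz {n} (a b : 'I_n -> R) :
  (\big[Rplus/0]_(i < n) (a i * b i)) ^ 2 <=
  (\big[Rplus/0]_(i < n) (a i * a i)) * (\big[Rplus/0]_(i < n) (b i * b i)).
Proof.
elim: n a b => [|n IH] a b; first by rewrite !big_ord0; lra.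
rewrite !big_ord_recr /=.
move: (IH (fun i => a (widen_ord (ssrnat.leqnSn n) i)) (fun i => b (widen_ord (ssrnat.leqnSn n) i))).
set C := \big[Rplus/0]_(i < n) _; set A := \big[Rplus/0]_(i < n) _;
  set B := \big[Rplus/0]_(i < n) _ => CS_n.
have A_ge0 : 0 <= A by apply: rsum_ge0 => i; apply: Rle_0_sqr.
have B_ge0 : 0 <= B by apply: rsum_ge0 => i; apply: Rle_0_sqr.
set x := a ord_max; set y := b ord_max; clearbody x y A B C.
(* the cross term 2xyC is bounded by x^2 B + y^2 A, the AM-GM form of CS_n *)
have cross : 2 * x * y * C <= x * x * B + y * y * A.
  have : 0 <= (x * x * B - y * y * A) * (x * x * B - y * y * A) by apply: Rle_0_sqr.
  have : x * x * (y * y) * (C * C) <= x * x * (y * y) * (A * B) by apply: Rmult_le_compat_l; nra.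
  case: (Rle_dec (2 * x * y * C) 0) => [|pos_cross] *; first by nra.
  apply: Rsqr_incr_0_var; rewrite /Rsqr; nra.
nra.
Qed.

Section EuclideanDistance.
Context {m : nat}.
Implicit Types x y z c v : pt m.

Lemma dist_ge0 x y : 0 <= dist x y.
Proof. exact: sqrt_pos. Qed.

Lemma dist_sym x y : dist x y = dist y x.
Proof. by rewrite /dist; congr sqrt; apply: eq_bigr => i _; ring. Qed.

Lemma dist_self x : dist x x = 0.
Proof. by rewrite /dist big1 ?sqrt_0 // => i _; ring. Qed.

Lemma dist_eq0 x y : dist x y = 0 -> x = y.
Proof.
have sq_ge0 i : 0 <= (x i - y i) * (x i - y i) by apply: Rle_0_sqr.
move=> /(sqrt_eq_0 _ (rsum_ge0 sq_ge0)) /(rsum_eq0 sq_ge0) sq0.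
by apply: functional_extensionality => i; have := sq0 i; nra.
Qed.

(* Expand |x - z|^2 = |a|^2 + 2 a.b + |b|^2 with a = x - y, b = y - z and
   bound a.b by Cauchy-Schwarz. *)
Lemma dist_triangle x y z : dist x z <= dist x y + dist y z.
Proof.
rewrite /dist; set a := fun i => x i - y i; set b := fun i => y i - z i.
have -> : \big[Rplus/0]_(i < m) ((x i - z i) * (x i - z i)) =
  \big[Rplus/0]_(i < m) (a i * a i) + 2 * \big[Rplus/0]_(i < m) (a i * b i)
  + \big[Rplus/0]_(i < m) (b i * b i).
  rewrite big_distrr -!big_split /=; apply: eq_bigr => i _; rewrite /a /b; ring.
have A_ge0 : 0 <= \big[Rplus/0]_(i < m) (a i * a i) by apply: rsum_ge0 => i; apply: Rle_0_sqr.
have B_ge0 : 0 <= \big[Rplus/0]_(i < m) (b i * b i) by apply: rsum_ge0 => i; apply: Rle_0_sqr.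
move: A_ge0 B_ge0 (cauchy_schwarz a b).
set A := \big[Rplus/0]_(i < m) _; set B := \big[Rplus/0]_(i < m) _;
  set C := \big[Rplus/0]_(i < m) _ => A_ge0 B_ge0 CS.
have sqrtA := sqrt_sqrt A A_ge0; have sqrtB := sqrt_sqrt B B_ge0.
have := sqrt_pos A; have := sqrt_pos B => sqrtB_ge0 sqrtA_ge0.
have C_le : C <= sqrt A * sqrt B.
  case: (Rle_dec C 0) => [|C_pos]; first by nra.
  apply: Rsqr_incr_0_var; rewrite /Rsqr; nra.
rewrite -(sqrt_Rsqr (sqrt A + sqrt B)); last by lra.
apply: sqrt_le_1_alt; rewrite /Rsqr; nra.
Qed.

Lemma dist_reverse_triangle x y z : Rabs (dist x z - dist y z) <= dist x y.
Proof.
have := dist_triangle x y z; have := dist_triangle y x z.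
by rewrite (dist_sym y x) => *; apply: Rabs_le; lra.
Qed.

Lemma boundary_ball_dist {c r v} : 0 < r -> boundary (ball c r) v -> dist c v = r.
Proof.
rewrite /ball => r_gt0 bd.
case: (Rtotal_order (dist c v) r) => [inside|[//|outside]].
- case: (bd (r - dist c v)) => [|_ [z [z_out vz]]]; first by lra.
  by have := dist_triangle c v z; lra.
- case: (bd (dist c v - r)) => [|[z [z_in vz]] _]; first by lra.
  by have := dist_triangle c z v; rewrite (dist_sym z v); lra.
Qed.

End EuclideanDistance.

Lemma rem_at_incl {A : Type} {i} {l : list A} {v} : In v (rem_at i l) -> In v l.
Proof.
elim: l i => [|a l IH] [|i] //=; first by right.
by case=> [->|/IH]; [left | right].
Qed.

Lemma rem_at_neq {A : Type} {i} {l : list A} {v} d :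
  NoDup l -> (i < length l)%nat -> In v (rem_at i l) -> v <> nth i l d.
Proof.
elim: l i => [|a l IH] [|i] //= /NoDup_cons_iff [a_notin nodup] i_lt.
- by move=> v_in v_eq; apply: a_notin; rewrite -v_eq.
- case=> [<-|v_in]; last by apply: IH => //; lia.
  by move=> a_eq; apply: a_notin; rewrite a_eq; apply: nth_In; lia.
Qed.


Section LeftKernel.
Local Open Scope ring_scope.

Lemma left_kernel_nonzero {F : fieldType} {n k} (A : 'M[F]_(n, k)) :
  (k < n)%nat -> exists2 v : 'rV_n, v != 0 & v *m A = 0.
Proof.
move/ssrnat.ltP => k_lt_n; have : kermx A != 0.
  rewrite kermx_eq0 -row_leq_rank -ssrnat.ltnNge.
  exact: ssrnat.leq_ltn_trans (rank_leq_col A) k_lt_n.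
by case/rowV0Pn => v /sub_kermxP vA v_neq0; exists v.
Qed.

End LeftKernel.

Lemma mulmx_eq0_entries {n k} {v : 'rV[R]_n} {A : 'M[R]_(n, k)} :
  (v *m A)%R = 0%R -> forall j, \big[Rplus/0]_(i < n) (v ord0 i * A i j) = 0.
Proof. by move=> vA j; have := ssrfun.congr1 (fun M : 'M[R]_(1, k) => M ord0 j) vA; rewrite !mxE. Qed.

Section AffineCombinations.
Context {m : nat}.
Implicit Types (ps : list (pt m)) (lam : nat -> R).

Lemma lincomb_sum lam ps i :
  lincomb lam ps i = \big[Rplus/0]_(k < length ps) (lam k * nth k ps origin i).
Proof.
elim: ps lam => [|p ps IH] lam /=; first by rewrite big_ord0.
by rewrite big_ord_recl IH.
Qed.

Lemma wsum_sum lam ps : wsum lam ps = \big[Rplus/0]_(k < length ps) lam k.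
Proof.
elim: ps lam => [|p ps IH] lam /=; first by rewrite big_ord0.
by rewrite big_ord_recl IH.
Qed.

Lemma lincomb_scale a lam ps i :
  lincomb (fun j => a * lam j) ps i = a * lincomb lam ps i.
Proof. by elim: ps lam => [|p ps IH] lam /=; [ring | rewrite IH; ring]. Qed.

Lemma wsum_scale a lam ps : wsum (fun j => a * lam j) ps = a * wsum lam ps.
Proof. by elim: ps lam => [|p ps IH] lam /=; [ring | rewrite IH; ring]. Qed.

Lemma bump_shift lam k :
  (fun j => lam (bump (S k) (S j))) = (fun j => lam (S (bump k j))).
Proof. by apply: functional_extensionality => j; rewrite bumpS. Qed.

Lemma lincomb_rem_at lam ps k i : (k < length ps)%nat ->
  lincomb lam ps i =
  lincomb (fun j => lam (bump k j)) (rem_at k ps) i + lam k * nth k ps origin i.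
Proof.
elim: ps lam k => [|p ps IH] lam [|k] /= k_lt; try lia; first by rewrite Rplus_comm.
rewrite (IH _ k) ?bump_shift; last by lia.
by change (bump (S k) 0) with 0%nat; ring.
Qed.

Lemma wsum_rem_at lam ps k : (k < length ps)%nat ->
  wsum lam ps = wsum (fun j => lam (bump k j)) (rem_at k ps) + lam k.
Proof.
elim: ps lam k => [|p ps IH] lam [|k] /= k_lt; try lia; first by rewrite Rplus_comm.
rewrite (IH _ k) ?bump_shift; last by lia.
by change (bump (S k) 0) with 0%nat; ring.
Qed.

(* More than m + 1 points of R^m are affinely dependent: the rows (p, 1) of
   their homogeneous coordinate matrix are linearly dependent. *)
Lemma affine_dependence ps : (m + 1 < length ps)%nat ->
  exists c k, (k < length ps)%nat /\ c k <> 0 /\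
    wsum c ps = 0 /\ forall i, lincomb c ps i = 0.
Proof.
move=> long; set n := length ps.
pose X : 'M[R]_(n, m) := (\matrix_(k, i) nth k ps origin i)%R.
have [v v_neq0 vA] := left_kernel_nonzero (row_mx X (const_mx 1 : 'M[R]_(n, 1))) long.
move/eqP: vA; rewrite mul_mx_row row_mx_eq0 => /andP [/eqP vX /eqP v1].
case/matrix0Pn: v_neq0 => i0 [k]; rewrite (ord1 i0) => vk_neq0.
pose c j := if insub j is Some j' then v ord0 j' else 0.
have cE (j : 'I_n) : c j = v ord0 j by rewrite /c valK.
exists c, (nat_of_ord k); split; first by apply/ssrnat.ltP.
split; first by rewrite cE; apply/eqP.
split=> [|i].
- rewrite wsum_sum; apply: (eq_trans _ (mulmx_eq0_entries v1 ord0)).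
  by apply: eq_bigr => j _; rewrite cE mxE Rmult_1_r.
- rewrite lincomb_sum; apply: (eq_trans _ (mulmx_eq0_entries vX i)).
  by apply: eq_bigr => j _; rewrite cE mxE.
Qed.

(* Among more than m + 1 points of R^m, some point lies in the affine hull
   of the others: solve the affine dependence for a vertex with nonzero
   coefficient. *)
Lemma vertex_in_affine_hull ps : (m + 1 < length ps)%nat ->
  exists k, (k < length ps)%nat /\ in_aff (rem_at k ps) (nth k ps origin).
Proof.
move/affine_dependence => [c [k [k_lt [ck_neq0 [wsum0 lincomb0]]]]].
exists k; split=> //; exists (fun j => - / c k * c (bump k j)); split.
- rewrite wsum_scale; have := wsum_rem_at c _ _ k_lt; rewrite wsum0 => split_k.
  have -> : wsum (fun j => c (bump k j)) (rem_at k ps) = - c k by lra.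
  by field.
- apply: functional_extensionality => i; rewrite lincomb_scale.
  have := lincomb_rem_at c _ _ i k_lt; rewrite lincomb0 => split_k.
  have -> : lincomb (fun j => c (bump k j)) (rem_at k ps) i = - (c k * nth k ps origin i).
    by lra.
  by field.
Qed.

End AffineCombinations.

Lemma diam_ge {m} {s : list (pt m)} {p q} : In p s -> In q s -> dist p q <= diam s.
Proof.
move=> p_in q_in; rewrite /diam.
have : In (dist p q) (map (fun pq => dist (fst pq) (snd pq)) (list_prod s s)).
  by apply: (in_map (fun pq : pt m * pt m => dist (fst pq) (snd pq)) _ (p, q)); apply: in_prod.
elim: (map _ _) => [|a l IH] //= [<-|/IH]; first exact: Rmax_l.
by move/Rle_trans; apply; apply: Rmax_r.
Qed.

Lemma diam_pos {m} {s : list (pt m)} : NoDup s -> (2 <= length s)%nat -> 0 < diam s.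
Proof.
case: s => [|p [|q s]] /= s_nodup s_len; try lia.
have p_neq_q : p <> q.
  by move=> p_eq_q; case/NoDup_cons_iff: s_nodup => p_notin _; apply: p_notin; left.
have pq_pos : 0 < dist p q by case: (dist_ge0 p q) => // /ssrfun.esym /dist_eq0.
have := diam_ge (s := p :: q :: s) (in_eq p _) (in_cons _ _ _ (in_eq q s)); lra.
Qed.

Section Goodness.
Context {m : nat} {G0 : R}.
Implicit Types s t u : list (pt m).

Lemma point_thickness t : length t = 1%nat -> thickness_ge t (G0 ^ simplex_dim t).
Proof. by rewrite /thickness_ge /simplex_dim => ->; rewrite /=; lra. Qed.

Lemma bad_length {t} : simplex t -> ~ good G0 t -> (2 <= length t)%nat.
Proof.
move=> [_ t_nodup] /not_all_ex_not [w w_bad].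
have [[[w_ne w_nodup] w_sub] w_thin] := imply_to_and _ _ w_bad.
have := NoDup_incl_length w_nodup w_sub.
case: w {w_bad w_nodup w_sub} w_ne w_thin => [|a [|b w]] // _ w_thin /=; last by lia.
by case: w_thin; apply: point_thickness.
Qed.

Lemma good_incl {s t} : good G0 s -> simplex t -> incl t s -> good G0 t.
Proof. by move=> s_good _ t_sub u [u_simplex u_sub]; apply: s_good; split=> //; apply: incl_tran t_sub. Qed.

(* Every Gamma0-bad simplex has a face that is a Gamma0-flake: descend to a
   bad proper face as long as there is one. *)
Lemma flake_in_bad {s} : simplex s -> ~ good G0 s -> exists tau, face tau s /\ flake G0 tau.
Proof.
move: {2}(length s) (le_n (length s)) => n; elim: n s => [|n IH] s len s_simplex s_bad.
  by case: s len s_simplex {s_bad} => [|a s] /= len [s_ne _]; [| lia].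
case: (classic (exists u, proper_face u s /\ ~ good G0 u)) => [[u [[u_face u_short] u_bad]]|no_bad].
- case: u_face => u_simplex u_sub.
  have [tau [[tau_simplex tau_sub] tau_flake]] := IH u ltac:(lia) u_simplex u_bad.
  by exists tau; split=> //; split=> //; apply: incl_tran u_sub.
- exists s; split; first by split=> //; apply: incl_refl.
  by split=> // u u_proper; apply: NNPP => u_bad; apply: no_bad; exists u.
Qed.

(* More than m + 1 distinct points of R^m never form a Gamma0-good simplex:
   some vertex lies in the affine hull of the others, so its altitude is 0,
   while the required altitude bound is positive. *)
Lemma overfull_bad {s} : 0 < G0 -> NoDup s -> (m + 1 < length s)%nat -> ~ good G0 s.
Proof.
move=> G0_pos s_nodup long s_good.
have [k [k_lt k_in_aff]] := vertex_in_affine_hull _ long.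
have s_face : face s s.
  split; [split=> // s_nil | exact: incl_refl].
  by rewrite s_nil /= in long; lia.
have := s_good s s_face; rewrite /thickness_ge /simplex_dim.
have -> : Nat.eqb (length s - 1) 0 = false by apply/Nat.eqb_neq; lia.
move/(_ k k_lt (nth k s origin) k_in_aff); rewrite dist_self.
have : 0 < G0 ^ (length s - 1) * (INR (length s - 1) * diam s).
  apply: Rmult_lt_0_compat; first exact: pow_lt.
  by apply: Rmult_lt_0_compat; [apply: lt_0_INR; lia | apply: diam_pos => //; lia].
lra.
Qed.

(* A flake inside a good simplex extended by one new vertex q must use q:
   otherwise it would lie in the good simplex and be good itself. *)
Lemma new_vertex_in_flake {s q tau} :
  good G0 s -> face tau (q :: s) -> flake G0 tau -> In q tau.
Proof.
move=> s_good [tau_simplex tau_sub] [tau_bad _]; apply: NNPP => q_notin.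
apply: tau_bad; apply: (good_incl s_good tau_simplex) => v v_in.
by case: (tau_sub v v_in) => // q_eq_v; rewrite q_eq_v in q_notin.
Qed.

End Goodness.

Section DelaunayBalls.
Context {m : nat} {P : list (pt m)}.

(* In an eps-dense set, a Delaunay ball centred in D_eps has radius < eps:
   the centre is eps-close to a point of P (not strictly inside the empty
   ball) or to the boundary of conv(P) (excluded by depth eps). *)
Lemma delaunay_ball_small {eps s} : eps_dense P eps -> in_Del_D P eps s ->
  exists x r, delaunay_with P s x r /\ 0 < r < eps /\ forall v, In v s -> dist x v = r.
Proof.
move=> dense [_ [_ [x [r [[x_ball s_bd] [x_conv x_deep]]]]]].
case: (x_ball) => r_pos [x_empty _]; exists x, r; split; first by split.
split; last by move=> v /s_bd; apply: boundary_ball_dist.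
split=> //; case: (dense x x_conv) => y [[y_in | y_bd] xy_lt].
- by have := x_empty y y_in; rewrite /ball; lra.
- by have := x_deep y y_bd; lra.
Qed.

Lemma unprotected_witness {delta s x r} : delaunay_with P s x r -> ~ protected P delta s ->
  exists q, In q P /\ ~ In q s /\ Rabs (dist q x - r) <= delta.
Proof.
move=> s_ball s_unprot; apply: NNPP => no_witness; apply: s_unprot.
exists x, r; split=> // q q_in q_notin; apply: NNPP => q_close.
apply: no_witness; exists q; split=> //; split=> //; apply: Rnot_lt_le => q_far.
apply: q_close; exists (Rabs (dist q x - r)); split=> // y y_bd.
case: s_ball => [[r_pos _] _]; have := boundary_ball_dist r_pos y_bd.
by move=> xy_r; have := dist_reverse_triangle q y x; rewrite (dist_sym y x) xy_r.
Qed.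

End DelaunayBalls.

Section ForbiddenConfigurations.
Context {m : nat} {P : list (pt m)} {mu eps G0 d0 : R}.

Lemma flake_forbidden {ps tau i x r} : incl ps P -> (length ps <= m + 2)%nat ->
  face tau ps -> flake G0 tau -> (i < length tau)%nat -> 0 < r < eps ->
  (forall v, In v (rem_at i tau) -> dist x v = r) ->
  Rabs (dist (nth i tau origin) x - r) <= d0 * mu * eps ->
  forbidden P mu eps G0 d0 tau.
Proof.
move=> ps_sub ps_len [tau_simplex tau_sub] tau_flake i_lt [r_pos r_lt] cospherical near.
have tau_len := NoDup_incl_length (proj2 tau_simplex) tau_sub.
have tau_long := bad_length tau_simplex (proj1 tau_flake).
split=> //; split; first exact: incl_tran tau_sub ps_sub.
split; first by exists (length tau - 2)%nat; lia.
by split=> //; exists i; split=> //; exists x, r.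
Qed.

(* A bad simplex of at most m + 2 points of P, inscribed in a sphere of
   radius < eps, contains a forbidden configuration (certified by any
   vertex of a flake face, which lies exactly on the sphere). *)
Lemma bad_cospherical_forbidden {s x r} : simplex s -> incl s P ->
  (length s <= m + 2)%nat -> ~ good G0 s -> 0 < r < eps ->
  (forall v, In v s -> dist x v = r) -> 0 <= d0 * mu * eps ->
  exists t, forbidden P mu eps G0 d0 t.
Proof.
move=> s_simplex s_sub s_len s_bad r_bounds cospherical delta_ge0.
have [tau [tau_face tau_flake]] := flake_in_bad s_simplex s_bad.
have on_sphere v : In v tau -> dist x v = r by move=> v_in; apply/cospherical/(proj2 tau_face).
have tau_long := bad_length (proj1 tau_face) (proj1 tau_flake).
exists tau; apply: (flake_forbidden s_sub s_len tau_face tau_flake (i := 0%nat) (x := x) _ r_bounds).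
- by lia.
- by move=> v /rem_at_incl /on_sphere.
- have vertex0_in : In (nth 0 tau origin) tau by apply: nth_In; lia.
  by rewrite dist_sym (on_sphere _ vertex0_in) Rminus_diag Rabs_R0.
Qed.

(* A good m-simplex s of P inscribed in a sphere of radius < eps, together
   with a further point q of P within d0 mu eps of that sphere, yields a
   forbidden configuration: the m + 2 points q :: s are bad, and each of
   their flakes contains q, which certifies it. *)
Lemma near_point_forbidden {s x r q} : simplex s -> incl s P ->
  length s = (m + 1)%nat -> good G0 s -> 0 < G0 -> 0 < r < eps ->
  (forall v, In v s -> dist x v = r) -> In q P -> ~ In q s ->
  Rabs (dist q x - r) <= d0 * mu * eps -> exists t, forbidden P mu eps G0 d0 t.
Proof.
move=> [_ s_nodup] s_sub s_len s_good G0_pos r_bounds cospherical q_in q_notin q_near.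
have qs_simplex : simplex (q :: s) by split=> //; constructor.
have qs_bad : ~ good G0 (q :: s) by apply: overfull_bad (proj2 qs_simplex) _ => //=; lia.
have [tau [tau_face tau_flake]] := flake_in_bad qs_simplex qs_bad.
have [i [i_lt tau_i]] := In_nth _ _ origin (new_vertex_in_flake s_good tau_face tau_flake).
exists tau; apply: (flake_forbidden (ps := q :: s) (x := x) _ _ tau_face tau_flake i_lt r_bounds).
- by move=> v [<- | /s_sub].
- by rewrite /=; lia.
- move=> v v_rem; have v_neq := rem_at_neq origin (proj2 (proj1 tau_face)) i_lt v_rem.
  case: (proj2 tau_face v (rem_at_incl v_rem)) => [q_eq_v | /cospherical //].
  by case: v_neq; rewrite -q_eq_v.
- by rewrite tau_i.
Qed.

End ForbiddenConfigurations.

Theorem mainTheorem6 (m : nat) (P : list (pt m)) (mu eps G0 d0 : R) :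
  NoDup P -> is_net P mu eps -> 0 < G0 <= 1 -> 0 <= d0 ->
  ((exists s, in_Del_D P eps s /\ length s = (m + 1)%nat /\
              ~ protected P (d0 * mu * eps) s) ->
     exists t, forbidden P mu eps G0 d0 t) /\
  ((exists s, in_Del_D P eps s /\ length s = (m + 1)%nat /\ ~ good G0 s) ->
     exists t, forbidden P mu eps G0 d0 t).
Proof.
move=> _ [mu_bounds [eps_pos [dense _]]] [G0_pos _] d0_ge0.
have delta_ge0 : 0 <= d0 * mu * eps by apply: Rmult_le_pos; [apply: Rmult_le_pos |]; lra.
have bad_case s : in_Del_D P eps s -> length s = (m + 1)%nat -> ~ good G0 s ->
    exists t, forbidden P mu eps G0 d0 t.
  move=> s_del s_len s_bad.
  have [x [r [_ [r_bounds cospherical]]]] := delaunay_ball_small dense s_del.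
  case: s_del => s_simplex [s_sub _].
  by apply: (bad_cospherical_forbidden s_simplex s_sub _ s_bad r_bounds cospherical) => //; lia.
split; last by case=> s [s_del [s_len s_bad]]; apply: bad_case s_del s_len s_bad.
case=> s [s_del [s_len s_unprot]].
case: (classic (good G0 s)) => [s_good | s_bad]; last exact: bad_case s_del s_len s_bad.
have [x [r [s_ball [r_bounds cospherical]]]] := delaunay_ball_small dense s_del.
have [q [q_in [q_notin q_near]]] := unprotected_witness s_ball s_unprot.
case: s_del => s_simplex [s_sub _].
exact: (near_point_forbidden s_simplex s_sub s_len s_good G0_pos r_bounds cospherical
          q_in q_notin q_near).
Qed.
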